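(* Let $X$ be an $n$-dimensional polyhedral normed space. Suppose that $Y \subseteq X$ is a $k$-dimensional subspace, $1 \leq k \leq n-1$, which is in general position and satisfies $\lambda(Y, X)=1$. Then there is a unique projection $P: X \to Y$ with $\|P\|=1$.
   Context: A normed space $X=(\mathbb{R}^n,\|\cdot\|)$ is polyhedral if its unit ball $B_X$ is a convex polytope; write $\mathrm{ext}\, B_X=\{x_1,\dots,x_N\}$ and $\mathrm{ext}\, B_{X^*}=\{f_1,\dots,f_M\}$ for the extreme points of the unit balls of $X$ and $X^*$. Two linear subspaces $Y,Z\subseteq\mathbb{R}^n$ are in general position if $\dim \mathrm{lin}(Y\cup Z)=\min(\dim Y+\dim Z,n)$. A subspace $Y$ is in general position if it is in general position with every subspace $\mathrm{lin}\{x_i : i\in I\}$, $I\subseteq\{1,\dots,N\}$, and every subspace $\bigcap_{i\in I}\ker f_i$, $I\subseteq\{1,\dots,M\}$. A projection onto $Y$ is a linear $P:X\to Y$ with $P|_Y=\mathrm{id}_Y$, and $\lambda(Y,X)$ is the infimum of the operator norms of such projections. *)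

From HB Require Import structures.
From mathcomp Require Import all_boot all_order all_algebra.
From mathcomp Require Import boolp classical_sets reals.
Set Implicit Arguments. Unset Strict Implicit. Unset Printing Implicit Defensive.
Import Order.TTheory GRing.Theory Num.Theory.
Local Open Scope ring_scope.
Local Open Scope classical_set_scope.

(* Vectors of R^n are row vectors 'rV[R]_n; a linear functional on R^n is
   also represented by a row vector f, acting by x |-> <x, f>. *)
Definition app (R : realType) (n : nat) (f x : 'rV[R]_n) : R :=
  \sum_(i < n) x 0 i * f 0 i.

Definition is_norm (R : realType) (n : nat) (N : 'rV[R]_n -> R) : Prop :=
  [/\ forall x, 0 <= N x,
      forall x, N x = 0 -> x = 0,
      forall (a : R) x, N (a *: x) = `|a| * N x &
      forall x y, N (x + y) <= N x + N y].

Definition unit_ball (R : realType) (n : nat) (N : 'rV[R]_n -> R) :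
  set 'rV[R]_n := [set x | N x <= 1].

Definition dual_unit_ball (R : realType) (n : nat) (N : 'rV[R]_n -> R) :
  set 'rV[R]_n := [set f | forall x, N x <= 1 -> `|app f x| <= 1].

Definition conv_hull (R : realType) (n m : nat) (v : 'I_m -> 'rV[R]_n) :
  set 'rV[R]_n :=
  [set x | exists w : 'I_m -> R,
     [/\ forall i, 0 <= w i, \sum_(i < m) w i = 1 &
         x = \sum_(i < m) w i *: v i]].

Definition extreme (R : realType) (n : nat) (S : set 'rV[R]_n) (x : 'rV[R]_n)
  : Prop :=
  S x /\ forall y z (t : R), S y -> S z -> 0 < t < 1 ->
          x = t *: y + (1 - t) *: z -> y = z.

Definition polyhedral (R : realType) (n : nat) (N : 'rV[R]_n -> R) : Prop :=
  exists m (v : 'I_m -> 'rV[R]_n), unit_ball N = conv_hull v.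

(* Subspaces are represented as row spaces of matrices (mxalgebra).
   General position of two subspaces. *)
Definition gen_pos2 (R : realType) (n p q : nat)
  (Y : 'M[R]_(p, n)) (Z : 'M[R]_(q, n)) : Prop :=
  \rank (Y + Z)%MS = minn (\rank Y + \rank Z) n.

Definition span_of (R : realType) (n m : nat) (v : 'I_m -> 'rV[R]_n) :
  'M[R]_(m, n) := \matrix_(i < m, j < n) v i 0 j.

Definition ker_of (R : realType) (n m : nat) (f : 'I_m -> 'rV[R]_n) :
  'M[R]_n := kermx (span_of f)^T.

Definition in_general_position (R : realType) (n p : nat)
  (N : 'rV[R]_n -> R) (Y : 'M[R]_(p, n)) : Prop :=
  (forall m (v : 'I_m -> 'rV[R]_n), (forall i, extreme (unit_ball N) (v i)) ->
       gen_pos2 Y (span_of v)) /\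
  (forall m (f : 'I_m -> 'rV[R]_n),
       (forall i, extreme (dual_unit_ball N) (f i)) ->
       gen_pos2 Y (ker_of f)).

Definition is_projection (R : realType) (n p : nat) (Y : 'M[R]_(p, n))
  (P : 'M[R]_n) : Prop :=
  (P <= Y)%MS /\ forall y : 'rV[R]_n, (y <= Y)%MS -> y *m P = y.

Definition op_norm (R : realType) (n : nat) (N : 'rV[R]_n -> R)
  (P : 'M[R]_n) : R :=
  sup [set N (x *m P) | x in unit_ball N].

Definition proj_const (R : realType) (n p : nat) (N : 'rV[R]_n -> R)
  (Y : 'M[R]_(p, n)) : R :=
  inf [set op_norm N P | P in is_projection Y].

(* The unit ball is the convex hull of finitely many extreme points v_i, so the
   operator norm of x |-> x P is max_i N (v_i P).  It is therefore continuous, and a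
   projection onto Y of minimal norm exists by compactness; since lambda(Y, X) = 1,
   its norm is 1.
   Let P, Q be projections onto Y of norm 1 with x (P - Q) <> 0, and normalise
   y := x (P - Q) so that N y = 1.  Write y = sum_i w_i v_i as a convex combination
   and let f be a norming functional of y (Hahn-Banach).  As f (y P) = f y = 1 and
   f (v_i P) <= 1, we get f (v_i P) = 1 whenever w_i > 0, and likewise for Q.  So
   x |-> f (x (P - Q)) vanishes on Y and on the span S of these v_i.  But y lies in
   Y and in S, so by general position Y + S is the whole space, and f y = 0. *)

From HB Require Import structures.
From mathcomp Require Import all_boot all_order all_algebra.
From mathcomp Require Import boolp classical_sets reals topology normedtype derive.
From mathcomp Require Import lra zify.
Set Implicit Arguments. Unset Strict Implicit. Unset Printing Implicit Defensive.
Import Order.TTheory GRing.Theory Num.Theory numFieldNormedType.Exports.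
Local Open Scope ring_scope.
Local Open Scope classical_set_scope.

Section LinearForms.
Variables (R : realType) (n : nat).
Implicit Types (f h x y : 'rV[R]_n).

Lemma appE f x : app f x = (x *m f^T) 0 0.
Proof. by rewrite /app mxE; apply: eq_bigr => i _; rewrite mxE. Qed.

Lemma appD f x y : app f (x + y) = app f x + app f y.
Proof. by rewrite !appE mulmxDl mxE. Qed.

Lemma appZ f a x : app f (a *: x) = a * app f x.
Proof. by rewrite !appE -scalemxAl mxE. Qed.

Lemma app0 f : app f 0 = 0.
Proof. by rewrite appE mul0mx mxE. Qed.

Lemma appN f x : app f (- x) = - app f x.
Proof. by rewrite -scaleN1r appZ mulN1r. Qed.

Lemma app_sum f (I : finType) (F : I -> 'rV[R]_n) :
  app f (\sum_i F i) = \sum_i app f (F i).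
Proof. exact: (big_morph _ (appD f) (app0 f)). Qed.

Lemma appDl f h x : app (f + h) x = app f x + app h x.
Proof. by rewrite !appE linearD /= mulmxDr mxE. Qed.

Lemma appZl a f x : app (a *: f) x = a * app f x.
Proof. by rewrite !appE linearZ /= -scalemxAr mxE. Qed.

Lemma app0l x : app 0 x = 0.
Proof. by rewrite appE trmx0 mulmx0 mxE. Qed.

Lemma app_separate p (W : 'M[R]_(p, n)) z : ~~ (z <= W)%MS ->
  exists h, (forall x, (x <= W)%MS -> app h x = 0) /\ app h z = 1.
Proof.
rewrite submxE => zW.
have [j zj] : exists j, (z *m cokermx W) 0 j != 0.
  apply/existsP; apply: contraNT zW => /existsPn zW0.
  by apply/eqP/rowP => j; rewrite [RHS]mxE; apply/eqP/negPn/zW0.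
set a := (z *m cokermx W) 0 j.
have appE' x : app (a^-1 *: (col j (cokermx W))^T) x = a^-1 * (x *m cokermx W) 0 j.
  by rewrite appZl appE trmxK colE mulmxA -colE mxE.
exists (a^-1 *: (col j (cokermx W))^T); split; last by rewrite appE' mulVf.
by move=> x; rewrite submxE appE' => /eqP ->; rewrite mxE mulr0.
Qed.
End LinearForms.

Section NormFacts.
Variables (R : realType) (n : nat) (N : 'rV[R]_n -> R).
Hypothesis normN : is_norm N.

Lemma normN_ge0 x : 0 <= N x. Proof. by case: normN. Qed.

Lemma normN_eq0 x : N x = 0 -> x = 0. Proof. by case: normN => _ + _ _; apply. Qed.

Lemma normNZ a x : N (a *: x) = `|a| * N x. Proof. by case: normN. Qed.

Lemma normN_triangle x y : N (x + y) <= N x + N y. Proof. by case: normN. Qed.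

Lemma normN0 : N 0 = 0.
Proof. by rewrite -(scale0r 0) normNZ normr0 mul0r. Qed.

Lemma normN_gt0 x : x != 0 -> 0 < N x.
Proof.
by move=> x0; rewrite lt_def normN_ge0 andbT; apply: contraNneq x0 => /normN_eq0 ->.
Qed.

Lemma normNZ_ge0 a x : 0 <= a -> N (a *: x) = a * N x.
Proof. by move=> a0; rewrite normNZ ger0_norm. Qed.

Lemma normN_normalize x : x != 0 -> N ((N x)^-1 *: x) = 1.
Proof.
by move=> x0; rewrite normNZ_ge0 ?mulVf ?invr_ge0 ?normN_ge0 // gt_eqF ?normN_gt0.
Qed.

Lemma normN_sum (I : finType) (F : I -> 'rV[R]_n) : N (\sum_i F i) <= \sum_i N (F i).
Proof.
elim/big_ind2: _ => [|x1 y1 x2 y2 le1 le2|//]; first by rewrite normN0.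
by apply: le_trans (normN_triangle _ _) _; apply: lerD.
Qed.

(* c is the value at z of a dominated extension of f from W to W + z. *)
Lemma dominated_gap p (W : 'M[R]_(p, n)) (f z : 'rV[R]_n) :
  (forall x, (x <= W)%MS -> app f x <= N x) ->
  exists c, (forall x, (x <= W)%MS -> app f x - N (x - z) <= c) /\
            (forall x, (x <= W)%MS -> c <= N (x + z) - app f x).
Proof.
move=> fN; set S := [set app f x - N (x - z) | x in [set x | (x <= W)%MS]].
have S_ub x2 : (x2 <= W)%MS -> ubound S (N (x2 + z) - app f x2).
  move=> x2W _ [x1 x1W <-].
  have := fN _ (addmx_sub x1W x2W); rewrite appD.
  have := normN_triangle (x1 - z) (x2 + z); rewrite addrACA addNr addr0; lra.
exists (sup S); split=> [x xW|x xW].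
  by apply: ub_le_sup; [exists (N (0 + z) - app f 0); apply/S_ub/sub0mx | exists x].
by apply: ge_sup (S_ub x xW); exists (app f 0 - N (0 - z)), 0 => //; apply: sub0mx.
Qed.

Lemma dominated_extension_step p (W : 'M[R]_(p, n)) (f z : 'rV[R]_n) :
  ~~ (z <= W)%MS -> (forall x, (x <= W)%MS -> app f x <= N x) ->
  exists g, (forall x, (x <= W)%MS -> app g x = app f x) /\
            (forall x, (x <= W + z)%MS -> app g x <= N x).
Proof.
move=> zW fN; have [h [hW hz]] := app_separate zW.
have [c [c_ge c_le]] := dominated_gap z fN.
exists (f + (c - app f z) *: h); split=> [x xW|_ /sub_addsmxP[[a b] /= ->]].
  by rewrite appDl appZl hW // mulr0 addr0.
have /sub_rVP[t ->] := submxMl b z.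
have wW : (a *m W <= W)%MS := submxMl a W.
rewrite appDl appZl !appD !appZ hW // hz add0r mulr1.
suff : app f (a *m W) + t * c <= N (a *m W + t *: z) by lra.
have [->|] := eqVneq t 0; first by rewrite scale0r addr0 mul0r addr0; apply: fN.
rewrite neq_lt => /orP[t_lt0|t_gt0].
- have := c_ge _ (scalemx_sub (- t)^-1 wW).
  have -> : (- t)^-1 *: (a *m W) - z = (- t)^-1 *: (a *m W + t *: z).
    by rewrite scalerDr scalerA invrN mulNr mulVf ?lt_eqF // scaleN1r.
  have tN_gt0 : 0 < - t by rewrite oppr_gt0.
  rewrite appZ normNZ_ge0 ?invr_ge0 ?(ltW tN_gt0) //.
  move/(ler_wpM2l (ltW tN_gt0)).
  by rewrite mulrBr !mulrA mulfV ?gt_eqF // !mul1r; lra.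
- have := c_le _ (scalemx_sub t^-1 wW).
  have -> : t^-1 *: (a *m W) + z = t^-1 *: (a *m W + t *: z).
    by rewrite scalerDr scalerA mulVf ?gt_eqF // scale1r.
  rewrite appZ normNZ_ge0 ?invr_ge0 ?(ltW t_gt0) //.
  move/(ler_wpM2l (ltW t_gt0)).
  by rewrite mulrBr !mulrA mulfV ?gt_eqF // !mul1r; lra.
Qed.

Lemma dominated_extension p (W : 'M[R]_(p, n)) f :
  (forall x, (x <= W)%MS -> app f x <= N x) ->
  exists g, (forall x, (x <= W)%MS -> app g x = app f x) /\ forall x, app g x <= N x.
Proof.
move: {2}(n - \rank W)%N (leqnn (n - \rank W)) => r.
elim: r p W f => [|r IHr] p W f rW fN.
  exists f; split=> // x; apply/fN/submx_full.
  by rewrite /row_full eqn_leq rank_leq_col -subn_eq0 -leqn0.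
have [Wfull|] := boolP (row_full W).
  by exists f; split=> // x; apply/fN/submx_full.
rewrite -sub1mx => /row_subPn[i zW]; set z := row i 1%:M in zW.
have [g [gW gN]] := dominated_extension_step zW fN.
have rWz : (\rank W < \rank (W + z))%N.
  have : (W < W + z)%MS.
    by rewrite ltmxE addsmxSl; apply: contra zW; apply: submx_trans (addsmxSr W z).
  by rewrite ltmxErank => /andP[].
have rWz_r : (n - \rank (W + z) <= r)%N.
  by move: rW rWz; have := rank_leq_col (W + z)%MS; lia.
have [g' [g'W g'N]] := IHr _ _ _ rWz_r gN.
exists g'; split=> // x xW.
by rewrite g'W ?gW // (submx_trans xW (addsmxSl W z)).
Qed.

Lemma norming_functional y : exists f, app f y = N y /\ forall x, app f x <= N x.
Proof.
have [->|y0] := eqVneq y 0.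
  by exists 0; split=> [|x]; rewrite app0l ?normN0 ?normN_ge0.
have [h [_ hy]] :
    exists h, (forall x, (x <= (0 : 'M[R]_n))%MS -> app h x = 0) /\ app h y = 1.
  by apply: app_separate; rewrite submx0.
have [f [fy fN]] : exists f, (forall x, (x <= y)%MS -> app f x = app (N y *: h) x) /\
    forall x, app f x <= N x.
  apply: dominated_extension => _ /sub_rVP[t ->].
  rewrite appZl appZ hy mulr1 normNZ mulrC.
  by apply: ler_wpM2r; [exact: normN_ge0 | exact: ler_norm].
by exists f; split=> //; rewrite fy // appZl hy mulr1.
Qed.
End NormFacts.

Section ConvexHull.
Variables (R : realType) (n : nat).

Lemma convex_weight_le1 m (w : 'I_m -> R) i :
  (forall j, 0 <= w j) -> \sum_j w j = 1 -> w i <= 1.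
Proof. by move=> w0 <-; rewrite (bigD1 i) //= lerDl sumr_ge0. Qed.

Lemma convex_comb_vertex m (v : 'I_m -> 'rV[R]_n) (w : 'I_m -> R) i :
  (forall j, 0 <= w j) -> \sum_j w j = 1 -> w i = 1 -> \sum_j w j *: v j = v i.
Proof.
move=> w0 w1 wi; have : \sum_(j | j != i) w j = 0.
  by move: w1; rewrite (bigD1 i) //= wi; lra.
move/psumr_eq0P=> /(_ (fun j _ => w0 j)) w'0.
by rewrite (bigD1 i) //= wi scale1r big1 ?addr0 // => j /w'0 ->; rewrite scale0r.
Qed.

Lemma conv_hull_vertex m (v : 'I_m -> 'rV[R]_n) i : conv_hull v (v i).
Proof.
exists (fun j => (j == i)%:R); split=> [j||]; first by rewrite ler0n.
  by rewrite (bigD1 i) //= eqxx big1 ?addr0 // => j /negbTE ->.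
by rewrite (bigD1 i) //= eqxx scale1r big1 ?addr0 // => j /negbTE ->; rewrite scale0r.
Qed.

Lemma conv_hull_drop m (v : 'I_m.+1 -> 'rV[R]_n) i0 :
  conv_hull (v \o lift i0) (v i0) -> conv_hull v = conv_hull (v \o lift i0).
Proof.
move=> [d [d0 d1 vd]]; apply/seteqP; split=> _ [w [w0 w1 ->]].
- exists (fun j => w i0 * d j + w (lift i0 j)); split=> [j||].
  + by rewrite addr_ge0 ?mulr_ge0.
  + by rewrite big_split /= -mulr_sumr d1 mulr1 -(bigD1_ord i0 _ (P := xpredT)).
  + rewrite (bigD1_ord i0) //= {1}vd scaler_sumr -big_split /=.
    by apply: eq_bigr => j _; rewrite scalerA scalerDl.
- exists (fun i => if unlift i0 i is Some j then w j else 0); split=> [i||].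
  + by case: (unlift i0 i).
  + rewrite (bigD1_ord i0) //= unlift_none add0r -w1.
    by apply: eq_bigr => j _; rewrite liftK.
  + rewrite (bigD1_ord i0) //= unlift_none scale0r add0r.
    by apply: eq_bigr => j _; rewrite liftK.
Qed.

Lemma vertex_in_conv_hull_drop m (v : 'I_m.+1 -> 'rV[R]_n) i0 (c : 'I_m.+1 -> R) :
  (forall i, 0 <= c i) -> \sum_i c i = 1 -> v i0 = \sum_i c i *: v i -> c i0 < 1 ->
  conv_hull (v \o lift i0) (v i0).
Proof.
move=> c0 c1 vc ci0; have ci0' : 1 - c i0 != 0 by rewrite subr_eq0 gt_eqF.
have c'sum : \sum_j c (lift i0 j) = 1 - c i0.
  by rewrite -c1 (bigD1_ord i0) //= addrC addrK.
exists (fun j => c (lift i0 j) / (1 - c i0)); split=> [j||].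
- by rewrite divr_ge0 // subr_ge0 ltW.
- by rewrite -mulr_suml c'sum mulfV.
- apply: (scalerI ci0'); rewrite scaler_sumr.
  under eq_bigr do rewrite scalerA mulrCA mulfV // mulr1.
  by rewrite scalerBl scale1r {1}vc (bigD1_ord i0) //= addrC addrK.
Qed.

Lemma nonextreme_vertex_in_conv_hull_drop m (v : 'I_m.+1 -> 'rV[R]_n) i0 :
  ~ extreme (conv_hull v) (v i0) -> conv_hull (v \o lift i0) (v i0).
Proof.
move=> not_ext; have [y [z [t [[a [a0 a1 ya]] [b [b0 b1 zb]] t01 vyz yz]]]] :
    exists y z t, [/\ conv_hull v y, conv_hull v z, 0 < t < 1,
                      v i0 = t *: y + (1 - t) *: z & y <> z].
  apply: contrapT => no_split; apply: not_ext; split=> [|y z t hy hz ht vyz].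
    exact: conv_hull_vertex.
  by apply: contrapT => yz; apply: no_split; exists y, z, t.
case/andP: t01 => t0 t1.
apply: (@vertex_in_conv_hull_drop _ _ _ (fun i => t * a i + (1 - t) * b i)).
- by move=> i; rewrite addr_ge0 ?mulr_ge0 ?subr_ge0 ?(ltW t0) ?(ltW t1).
- by rewrite big_split /= -!mulr_sumr a1 b1 !mulr1 addrC subrK.
- rewrite vyz ya zb !scaler_sumr -big_split /=.
  by apply: eq_bigr => i _; rewrite !scalerA -scalerDl.
rewrite ltNge; apply/negP => c1; apply: yz.
have := convex_weight_le1 i0 a0 a1; have := convex_weight_le1 i0 b0 b1 => b_le1 a_le1.
have a_eq1 : a i0 = 1 by apply/le_anti; rewrite a_le1 /=; nra.
have b_eq1 : b i0 = 1 by apply/le_anti; rewrite b_le1 /=; nra.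
by rewrite ya zb !(convex_comb_vertex v _ _ a_eq1) ?(convex_comb_vertex v _ _ b_eq1).
Qed.

Lemma conv_hull_extreme_vertices m (v : 'I_m -> 'rV[R]_n) :
  exists m' (v' : 'I_m' -> 'rV[R]_n),
    conv_hull v' = conv_hull v /\ forall i, extreme (conv_hull v) (v' i).
Proof.
elim: m v => [|m IHm] v; first by exists 0%N, v; split=> // -[].
have [v_ext|] := pselect (forall i, extreme (conv_hull v) (v i)).
  by exists m.+1, v.
move=> /existsNP[i0 /nonextreme_vertex_in_conv_hull_drop/conv_hull_drop hull_eq].
by have [m' [v' [v'_hull v'_ext]]] := IHm (v \o lift i0); exists m', v'; rewrite hull_eq.
Qed.

End ConvexHull.

Section ProjectionFacts.
Variables (R : realType) (n p : nat) (Y : 'M[R]_(p, n)).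

Lemma projection_mulmx P : is_projection Y P -> Y *m P = Y.
Proof. by case=> _ PY; apply/row_matrixP => i; rewrite row_mul PY ?row_sub. Qed.

Lemma projection_sub P (x : 'rV[R]_n) : is_projection Y P -> (x *m P <= Y)%MS.
Proof. by case=> PY _; apply: submx_trans (submxMl x P) PY. Qed.

Lemma projection_diff_sub P Q (x : 'rV[R]_n) :
  is_projection Y P -> is_projection Y Q -> (x *m (P - Q) <= Y)%MS.
Proof.
move=> Pproj Qproj; rewrite mulmxBr -mulNmx.
by rewrite addmx_sub ?(projection_sub _ Pproj) ?(projection_sub _ Qproj).
Qed.

End ProjectionFacts.

Lemma gen_pos2_row_full (R : realType) n p q (Y : 'M[R]_(p, n)) (S : 'M[R]_(q, n))
    (y : 'rV[R]_n) :
  gen_pos2 Y S -> y != 0 -> (y <= Y)%MS -> (y <= S)%MS -> row_full (Y + S).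
Proof.
rewrite /gen_pos2 /row_full => gp y0 yY yS.
have : (y <= Y :&: S)%MS by rewrite sub_capmx yY yS.
move/mxrankS; rewrite rank_rV y0.
have := mxrank_sum_cap Y S; have := rank_leq_col Y; have := rank_leq_col S.
by rewrite gp; lia.
Qed.

Lemma span_of_comb (R : realType) n m (u : 'I_m -> 'rV[R]_n) (a : 'I_m -> R) :
  ((\sum_i a i *: u i)%R <= span_of u)%MS.
Proof.
apply: summx_sub => i _; rewrite scalemx_sub //.
by rewrite (_ : u i = row i (span_of u)) ?row_sub //; apply/rowP => j; rewrite !mxE.
Qed.

Lemma sum_sub_span_support (R : realType) n m (u : 'I_m -> 'rV[R]_n) (a : 'I_m -> R) :
  ((\sum_i a i *: u i)%R <=
     span_of (fun j : 'I_#|[pred i | a i != 0]| => u (enum_val j)))%MS.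
Proof.
rewrite (bigID [pred i | a i != 0]) /= [X in _ + X]big1 ?addr0 => [|i /negPn/eqP ->].
  by rewrite big_enum_val; exact: span_of_comb.
by rewrite scale0r.
Qed.

Lemma sup_eq_max (R : realType) (E : set R) x : E x -> ubound E x -> sup E = x.
Proof.
move=> Ex ubx; apply/le_anti; rewrite ge_sup //=; last by exists x.
by apply: ub_le_sup => //; exists x.
Qed.

Lemma inf_eq_min (R : realType) (E : set R) x : E x -> lbound E x -> inf E = x.
Proof.
move=> Ex lbx; apply/le_anti; rewrite lb_le_inf ?andbT //; last by exists x.
by apply: ge_inf => //; exists x.
Qed.

Section PolyhedralOpNorm.
Variables (R : realType) (n : nat) (N : 'rV[R]_n -> R).
Hypothesis normN : is_norm N.
Variables (m : nat) (v : 'I_m -> 'rV[R]_n).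
Hypothesis ball_hull : unit_ball N = conv_hull v.

Lemma unit_ball_convex_comb x : N x <= 1 ->
  exists w : 'I_m -> R,
    [/\ forall i, 0 <= w i, \sum_i w i = 1 & x = \sum_i w i *: v i].
Proof. by move=> x1; have : unit_ball N x by []; rewrite ball_hull. Qed.

Lemma vertex_norm_le1 i : N (v i) <= 1.
Proof. by have := conv_hull_vertex v i; rewrite -ball_hull. Qed.

Lemma normN_mulmx_vertex_max x P : N x <= 1 ->
  N (x *m P) <= \big[Num.max/0]_(i < m) N (v i *m P).
Proof.
move=> /unit_ball_convex_comb[w [w0 w1 ->]].
rewrite mulmx_suml; apply: le_trans (normN_sum normN _) _.
rewrite -[leRHS]mul1r -w1 mulr_suml; apply: ler_sum => i _.
by rewrite -scalemxAl normNZ_ge0 // ler_wpM2l //; exact: le_bigmax.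
Qed.

Lemma op_norm_vertices P : op_norm N P = \big[Num.max/0]_(i < m) N (v i *m P).
Proof.
apply: sup_eq_max => [|_ [x x1 <-]]; last exact: normN_mulmx_vertex_max.
elim/big_ind: _ => [|a b [x x1 <-] [y y1 <-]|i _].
- by exists 0; rewrite /unit_ball /= ?mul0mx (normN0 normN) ?ler01.
- by rewrite /Num.max; case: ifP => _; [exists y | exists x].
- by exists (v i); [exact: vertex_norm_le1 | ].
Qed.

Lemma op_norm_ge0 P : 0 <= op_norm N P.
Proof.
rewrite op_norm_vertices; elim/big_ind: _ => // [a b a0 b0|i _].
  by rewrite le_max a0.
exact: normN_ge0.
Qed.

Lemma vertex_le_op_norm P i : N (v i *m P) <= op_norm N P.
Proof. by rewrite op_norm_vertices; exact: le_bigmax. Qed.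

Lemma op_norm_le P c : 0 <= c -> (forall i, N (v i *m P) <= c) -> op_norm N P <= c.
Proof. by move=> c0 vc; rewrite op_norm_vertices; exact: bigmax_le. Qed.

Lemma normN_mulmx_le x P : N (x *m P) <= op_norm N P * N x.
Proof.
have [->|x0] := eqVneq x 0; first by rewrite mul0mx (normN0 normN) mulr0.
have Nx_gt0 := normN_gt0 normN x0.
have x'1 : N ((N x)^-1 *: x) <= 1 by rewrite normN_normalize.
have := normN_mulmx_vertex_max P x'1; rewrite -op_norm_vertices -scalemxAl.
rewrite normNZ_ge0 ?invr_ge0 ?(ltW Nx_gt0) // mulrC ler_pdivrMr //.
Qed.

Lemma projection_active_vertex p (Y : 'M[R]_(p, n)) P (f y : 'rV[R]_n) w i :
  is_projection Y P -> op_norm N P <= 1 -> (y <= Y)%MS ->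
  (forall j, 0 <= w j) -> \sum_j w j = 1 -> y = \sum_j w j *: v j ->
  app f y = 1 -> (forall x, app f x <= N x) -> 0 < w i -> app f (v i *m P) = 1.
Proof.
move=> [_ Pid] P1 yY w0 w1 yw fy fN wi.
have fvP_le1 j : app f (v j *m P) <= 1.
  exact: le_trans (fN _) (le_trans (vertex_le_op_norm P j) P1).
have : \sum_j w j * (1 - app f (v j *m P)) = 0.
  move: fy; rewrite -(Pid y yY) yw mulmx_suml app_sum.
  under eq_bigr do rewrite -scalemxAl appZ.
  move=> fPy; under eq_bigr do rewrite mulrBr mulr1.
  by rewrite sumrB w1 fPy subrr.
have gap_ge0 j : true -> 0 <= w j * (1 - app f (v j *m P)).
  by move=> _; rewrite mulr_ge0 ?subr_ge0.
move/(psumr_eq0P gap_ge0)/(_ i isT)/eqP.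
by rewrite mulf_eq0 gt_eqF //= subr_eq0 => /eqP.
Qed.

Lemma norm1_projection_unique p (Y : 'M[R]_(p, n)) P Q :
  (forall i, extreme (unit_ball N) (v i)) ->
  (forall m' (u : 'I_m' -> 'rV[R]_n),
     (forall i, extreme (unit_ball N) (u i)) -> gen_pos2 Y (span_of u)) ->
  is_projection Y P -> is_projection Y Q -> op_norm N P <= 1 -> op_norm N Q <= 1 ->
  P = Q.
Proof.
move=> v_ext Y_gp Pproj Qproj P1 Q1; apply/eqP; rewrite -subr_eq0; set D := P - Q.
suff D_ker (x : 'rV[R]_n) : x *m D = 0.
  by rewrite -[D]mul1mx -sub_kermx; apply/rV_subP => x _; rewrite sub_kermx D_ker.
apply/eqP; apply: contraT => xD0; set x' := (N (x *m D))^-1 *: x; set y := x' *m D.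
have y1 : N y = 1 by rewrite /y -scalemxAl normN_normalize.
have y0 : y != 0 by apply: contra_eqN y1 => /eqP ->; rewrite (normN0 normN) eq_sym oner_eq0.
have yY : (y <= Y)%MS := projection_diff_sub x' Pproj Qproj.
have [w [w0 w1 yw]] : exists w : 'I_m -> R,
    [/\ forall i, 0 <= w i, \sum_i w i = 1 & y = \sum_i w i *: v i].
  by apply: unit_ball_convex_comb; rewrite y1.
have [f [fy fN]] := norming_functional normN y; rewrite y1 in fy.
pose u j := v (@enum_val _ (mem [pred i | w i != 0]) j).
have yS : (y <= span_of u)%MS by rewrite yw; exact: sum_sub_span_support.
have YS_full := gen_pos2_row_full (Y_gp _ u (fun j => v_ext _)) y0 yY yS.
set c := D *m f^T.
have Yc : (Y <= kermx c)%MS.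
  rewrite sub_kermx mulmxA mulmxBr (projection_mulmx Pproj) (projection_mulmx Qproj).
  by rewrite subrr mul0mx.
have Sc : (span_of u <= kermx c)%MS.
  apply/row_subP => j; rewrite sub_kermx.
  have -> : row j (span_of u) = u j by apply/rowP => k; rewrite !mxE.
  have wj : 0 < w (enum_val j) by rewrite lt_def w0 andbT; have := enum_valP j; rewrite inE.
  rewrite [u j *m c]mx11_scalar mulmxA -appE /D mulmxBr appD appN.
  rewrite (projection_active_vertex Pproj P1 yY w0 w1 yw fy fN wj).
  by rewrite (projection_active_vertex Qproj Q1 yY w0 w1 yw fy fN wj) subrr raddf0.
have x'c : x' *m c = 0.
  apply/eqP; rewrite -sub_kermx; apply: submx_trans (submx_full x' YS_full) _.
  by rewrite addsmx_sub Yc Sc.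
by move: fy; rewrite appE /y -mulmxA x'c mxE => /eqP; rewrite eq_sym oner_eq0.
Qed.
End PolyhedralOpNorm.

Section MatrixNormBounds.
Variable R : realType.

Lemma mx_norm_entry_le p q (A : 'M[R]_(p, q)) i j : `|A i j| <= `|A|.
Proof.
rewrite [`|A|]mx_normrE.
exact: (le_bigmax _ (fun ij : 'I_p * 'I_q => `|A ij.1 ij.2|) (i, j)).
Qed.

Lemma mx_norm_le_entries p q (A : 'M[R]_(p, q)) c :
  0 <= c -> (forall i j, `|A i j| <= c) -> `|A| <= c.
Proof.
by move=> c0 Ac; rewrite [`|A|]mx_normrE; apply: bigmax_le => // -[i j] _; apply: Ac.
Qed.

Definition mx_abs_sum p q (A : 'M[R]_(p, q)) : R := \sum_i \sum_j `|A i j|.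

Lemma mx_abs_sum_ge0 p q (A : 'M[R]_(p, q)) : 0 <= mx_abs_sum A.
Proof. by do 2!apply: sumr_ge0 => ? _. Qed.

Lemma mx_norm_mulmx_le_l p q r (A : 'M[R]_(p, q)) (B : 'M[R]_(q, r)) :
  `|A *m B| <= mx_abs_sum A * `|B|.
Proof.
apply: mx_norm_le_entries => [|i j]; first by rewrite mulr_ge0 ?mx_abs_sum_ge0.
rewrite mxE; apply: le_trans (ler_norm_sum _ _ _) _.
apply: (@le_trans _ _ ((\sum_l `|A i l|) * `|B|)).
  by rewrite mulr_suml; apply: ler_sum => l _; rewrite normrM ler_wpM2l ?mx_norm_entry_le.
rewrite ler_wpM2r // /mx_abs_sum (bigD1 i) //= lerDl.
by do 2!apply: sumr_ge0 => ? _.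
Qed.

Lemma mx_norm_mulmx_le_r p q r (A : 'M[R]_(p, q)) (B : 'M[R]_(q, r)) :
  `|A *m B| <= `|A| * mx_abs_sum B.
Proof.
apply: mx_norm_le_entries => [|i j]; first by rewrite mulr_ge0 ?mx_abs_sum_ge0.
rewrite mxE; apply: le_trans (ler_norm_sum _ _ _) _.
apply: (@le_trans _ _ (`|A| * \sum_l `|B l j|)).
  by rewrite mulr_sumr; apply: ler_sum => l _; rewrite normrM ler_wpM2r ?mx_norm_entry_le.
rewrite ler_wpM2l // /mx_abs_sum; apply: ler_sum => l _.
by rewrite (bigD1 j) //= lerDl sumr_ge0.
Qed.

Lemma mx_norm_vec_mx p q (d : 'rV[R]_(p * q)) : `|vec_mx d| = `|d|.
Proof.
apply/le_anti/andP; split; apply: mx_norm_le_entries => // i j.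
  have -> : vec_mx d i j = d 0 (mxvec_index i j) by rewrite -{2}(vec_mxK d) mxvecE.
  exact: mx_norm_entry_le.
rewrite (ord1 i); case/mxvec_indexP: j => a b.
by rewrite -{1}(vec_mxK d) mxvecE mx_norm_entry_le.
Qed.

End MatrixNormBounds.

Lemma lipschitz_continuous (R : realType) (U V : normedModType R) (f : U -> V) (C : R) :
  (forall x y, `|f x - f y| <= C * `|x - y|) -> continuous f.
Proof.
move=> f_lip x; apply/cvgrPdist_lt => e e0.
have C1 : 0 < `|C| + 1 by rewrite ltr_wpDl.
have eC : 0 < e / (`|C| + 1) by rewrite divr_gt0.
near=> y.
have xy : `|x - y| < e / (`|C| + 1) by near: y; apply: cvgr_dist_lt => //; exact: cvg_id.
apply: le_lt_trans (f_lip x y) _; apply: le_lt_trans (_ : _ <= (`|C| + 1) * `|x - y|) _.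
  by rewrite ler_wpM2r // (le_trans (ler_norm _)) // lerDl.
by rewrite -ltr_pdivlMl // mulrC.
Unshelve. all: by end_near.
Qed.

Section MatrixContinuity.
Variable R : realType.

Lemma continuous_vec_mx p q : continuous (@vec_mx R p q).
Proof.
by apply: (@lipschitz_continuous _ _ _ _ 1) => x y; rewrite -linearB mx_norm_vec_mx mul1r.
Qed.

Lemma continuous_mulmxl p q r (A : 'M[R]_(p, q)) :
  continuous (fun B : 'M[R]_(q, r) => A *m B).
Proof.
apply: (@lipschitz_continuous _ _ _ _ (mx_abs_sum A)) => B C.
by rewrite -mulmxBr mx_norm_mulmx_le_l.
Qed.

Lemma continuous_mulmxr p q r (B : 'M[R]_(q, r)) :
  continuous (fun A : 'M[R]_(p, q) => A *m B).
Proof.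
apply: (@lipschitz_continuous _ _ _ _ (mx_abs_sum B)) => A C.
by rewrite -mulmxBl mulrC mx_norm_mulmx_le_r.
Qed.

End MatrixContinuity.

Lemma projectionE (R : realType) n p (Y : 'M[R]_(p, n)) P :
  is_projection Y P <-> P *m cokermx Y = 0 /\ Y *m P = Y.
Proof.
split=> [Pproj|[PY YP]].
  by split; [apply/eqP; rewrite -submxE; case: Pproj | exact: projection_mulmx].
by split=> [|y /submxP[a ->]]; [rewrite submxE PY | rewrite -mulmxA YP].
Qed.

Lemma closed_projections (R : realType) n p (Y : 'M[R]_(p, n)) :
  closed (is_projection Y).
Proof.
have closed1 m1 m2 (M : 'M[R]_(m1, m2)) : closed [set M].
  exact/accessible_closed_set1/hausdorff_accessible/norm_hausdorff.
rewrite (_ : is_projection Y =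
    (fun P => P *m cokermx Y) @^-1` [set 0] `&` (fun P => Y *m P) @^-1` [set Y]).
  apply: closedI; apply: (proj1 (continuous_closedP _)) (closed1 _ _ _).
    exact: continuous_mulmxr.
  exact: continuous_mulmxl.
by apply/funext => P; apply/propext; exact: projectionE.
Qed.

Section MinimalProjection.
Variables (R : realType) (n : nat) (N : 'rV[R]_n -> R).
Hypothesis normN : is_norm N.
Variables (m : nat) (v : 'I_m -> 'rV[R]_n).
Hypothesis ball_hull : unit_ball N = conv_hull v.

Let C_N := \sum_j N ('e_j : 'rV[R]_n).
Let C_v := \sum_i `|v i|.

Lemma normN_le_mx_norm x : N x <= C_N * `|x|.
Proof.
rewrite {1}(row_sum_delta x) mulr_suml; apply: le_trans (normN_sum normN _) _.
apply: ler_sum => j _; rewrite (normNZ normN) mulrC ler_wpM2l ?(normN_ge0 normN) //.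
exact: mx_norm_entry_le.
Qed.

Lemma mx_norm_le_normN x : `|x| <= C_v * N x.
Proof.
have [->|x0] := eqVneq x 0; first by rewrite normr0 (normN0 normN) mulr0.
have Nx_gt0 := normN_gt0 normN x0.
have x'1 : N ((N x)^-1 *: x) <= 1 by rewrite normN_normalize.
have [w [w0 w1 x'w]] := unit_ball_convex_comb ball_hull x'1.
have x'_le : `|(N x)^-1 *: x| <= C_v.
  rewrite x'w; apply: le_trans (ler_norm_sum _ _ _) _; apply: ler_sum => i _.
  by rewrite normrZ ger0_norm // ler_piMl // (convex_weight_le1 _ w0 w1).
move: x'_le; rewrite normrZ ger0_norm ?invr_ge0 ?(ltW Nx_gt0) //.
by rewrite mulrC ler_pdivrMr // mulrC.
Qed.

Let C_N_ge0 : 0 <= C_N. Proof. by apply: sumr_ge0 => j _; exact: normN_ge0. Qed.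
Let C_v_ge0 : 0 <= C_v. Proof. by apply: sumr_ge0 => i _; exact: normr_ge0. Qed.
Let C_op := C_N * \sum_i mx_abs_sum (v i).

Lemma op_norm_le_add P Q : op_norm N P <= op_norm N Q + C_op * `|P - Q|.
Proof.
have C_op_ge0 : 0 <= C_op.
  by rewrite mulr_ge0 // sumr_ge0 // => i _; exact: mx_abs_sum_ge0.
apply: (op_norm_le normN ball_hull) => [|i].
  by apply: addr_ge0; [exact: (op_norm_ge0 normN ball_hull) | exact: mulr_ge0].
have -> : v i *m P = v i *m (P - Q) + v i *m Q by rewrite -mulmxDr subrK.
apply: le_trans (normN_triangle normN _ _) _; rewrite addrC lerD //.
  exact: (vertex_le_op_norm normN ball_hull).
apply: le_trans (normN_le_mx_norm _) _; rewrite -mulrA ler_wpM2l //.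
apply: le_trans (mx_norm_mulmx_le_l _ _) _; rewrite ler_wpM2r //.
by rewrite (bigD1 i) //= lerDl sumr_ge0 // => k _; exact: mx_abs_sum_ge0.
Qed.

Lemma continuous_op_norm : continuous (op_norm N).
Proof.
apply: (@lipschitz_continuous _ _ _ _ C_op) => P Q; rewrite ler_norml.
by have := op_norm_le_add P Q; have := op_norm_le_add Q P; rewrite -normrN opprB; lra.
Qed.

Lemma mx_norm_le_op_norm P : `|P| <= C_v * C_N * op_norm N P.
Proof.
apply: mx_norm_le_entries => [|a b].
  by rewrite !mulr_ge0 //; exact: (op_norm_ge0 normN ball_hull).
have -> : P a b = (('e_a : 'rV[R]_n) *m P) 0 b by rewrite -rowE mxE.
apply: le_trans (mx_norm_entry_le _ 0 b) _; apply: le_trans (mx_norm_le_normN _) _.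
rewrite -mulrA ler_wpM2l //; apply: le_trans (normN_mulmx_le normN ball_hull _ _) _.
rewrite mulrC ler_wpM2r ?(op_norm_ge0 normN ball_hull) //.
by rewrite /C_N (bigD1 a) //= lerDl sumr_ge0 // => j _; exact: normN_ge0.
Qed.

Lemma exists_min_projection p (Y : 'M[R]_(p, n)) P0 : is_projection Y P0 ->
  exists2 P, is_projection Y P &
    forall Q, is_projection Y Q -> op_norm N P <= op_norm N Q.
Proof.
move=> P0proj; set c := op_norm N P0.
pose A := vec_mx @^-1` (is_projection Y `&` [set P | op_norm N P <= c]).
have A_P0 : A (mxvec P0) by rewrite /A /= mxvecK.
have A_compact : compact A.
  apply: bounded_closed_compact.
    exists (C_v * C_N * c); split=> [|M cM d [_ dc]]; first exact: num_real.
    rewrite /= -mx_norm_vec_mx; apply: le_trans (ltW cM).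
    by apply: le_trans (mx_norm_le_op_norm _) _; rewrite ler_wpM2l ?mulr_ge0.
  apply: (proj1 (continuous_closedP _)); first exact: continuous_vec_mx.
  apply: closedI; first exact: closed_projections.
  exact: (proj1 (continuous_closedP _) continuous_op_norm _ (@closed_le _ c)).
have op_vec_cont : {within A, continuous (op_norm N \o vec_mx)}.
  apply: continuous_subspaceT => d.
  by apply: continuous_comp; [exact: continuous_vec_mx | exact: continuous_op_norm].
have [d /set_mem [dproj _] dmin] :=
  compact_EVT_min (ex_intro _ _ A_P0) A_compact op_vec_cont.
exists (vec_mx d) => // Q Qproj; have [Qc|cQ] := leP (op_norm N Q) c.
  by rewrite -[Q]mxvecK; apply: dmin; rewrite inE /A /= mxvecK.
by apply: le_trans (ltW cQ); have := dmin _ (mem_set A_P0); rewrite /= mxvecK.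
Qed.

End MinimalProjection.

Theorem mainTheorem7 (R : realType) (n : nat) (N : 'rV[R]_n -> R)
  (k : nat) (Y : 'M[R]_n) :
  is_norm N -> polyhedral N ->
  \rank Y = k -> (1 <= k)%N -> (k <= n - 1)%N ->
  in_general_position N Y ->
  proj_const N Y = 1 ->
  exists P : 'M[R]_n, [/\ is_projection Y P, op_norm N P = 1 &
    forall Q : 'M[R]_n, is_projection Y Q -> op_norm N Q = 1 -> Q = P].
Proof.
move=> normN [m0 [v0 ball_v0]] _ _ _ [Y_gp _] lambda1.
have [m [v [v_hull v_ext]]] := conv_hull_extreme_vertices v0.
have {}v_ext i : extreme (unit_ball N) (v i) by rewrite ball_v0.
have ball_v : unit_ball N = conv_hull v by rewrite ball_v0 v_hull.
have [P0 P0proj] : exists P0, is_projection Y P0.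
  apply: contrapT => no_proj.
  have no_norms : [set op_norm N P | P in is_projection Y] = set0.
    by apply/seteqP; split=> // x [P Pproj _]; apply: no_proj; exists P.
  by move: lambda1; rewrite /proj_const no_norms inf0 => /eqP; rewrite eq_sym oner_eq0.
have [P Pproj Pmin] := exists_min_projection normN ball_v P0proj.
have P1 : op_norm N P = 1.
  by rewrite -lambda1; apply/esym/inf_eq_min => [|_ [Q Qproj <-]]; [exists P | exact: Pmin].
exists P; split=> // Q Qproj Q1.
by apply: (norm1_projection_unique normN ball_v v_ext Y_gp); rewrite ?Q1 ?P1.
Qed.
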